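(* For all positive integers $m\le k$ there exists a Boolean function $g:\{0,1\}^n\to\{0,1\}$ (for some $n$) with $s_0(g)=m$, $bs_0(g)=k$ and \[ C_1(g)=\left\lfloor \frac{3\lceil k/m\rceil}{2}\right\rfloor+1. \]
   Context: For $x\in\{0,1\}^n$ and $S\subseteq[n]$, $x^S$ denotes $x$ with all bits in $S$ flipped. $s(g,x)$ is the number of $i$ with $g(x)\neq g(x^{\{i\}})$ and $s_0(g)=\max\{s(g,x): g(x)=0\}$. $bs(g,x)$ is the maximum number of pairwise disjoint sets $B_1,\dots,B_b\subseteq[n]$ with $g(x^{B_j})\neq g(x)$ for all $j$, and $bs_0(g)=\max\{bs(g,x): g(x)=0\}$. A 1-certificate is a partial assignment $c:S\to\{0,1\}$ such that $g$ equals 1 on every input agreeing with $c$ on $S$; $C(g,x)$ is the minimum $|S|$ over certificates (partial assignments on which $g$ is constant) agreeing with $x$, and $C_1(g)=\max\{C(g,x): g(x)=1\}$. *)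

From mathcomp Require Import all_boot.
Set Implicit Arguments. Unset Strict Implicit. Unset Printing Implicit Defensive.

Definition input (n : nat) := {ffun 'I_n -> bool}.

Definition flip n (x : input n) (S : {set 'I_n}) : input n :=
  [ffun i => if i \in S then ~~ x i else x i].

Definition sens n (g : input n -> bool) (x : input n) : nat :=
  #|[set i : 'I_n | g x != g (flip x [set i])]|.

(* s_0(g) = max over 0-inputs (0 if there are none) *)
Definition s0 n (g : input n -> bool) : nat :=
  \max_(x : input n | ~~ g x) sens g x.

Definition sens_blocks n (g : input n -> bool) (x : input n)
    (P : {set {set 'I_n}}) : bool :=
  [&& trivIset P, set0 \notin P & [forall B in P, g (flip x B) != g x]].

Definition bsens n (g : input n -> bool) (x : input n) : nat :=
  \max_(P : {set {set 'I_n}} | sens_blocks g x P) #|P|.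

Definition bs0 n (g : input n -> bool) : nat :=
  \max_(x : input n | ~~ g x) bsens g x.

Definition is_cert n (g : input n -> bool) (x : input n) (S : {set 'I_n}) : bool :=
  [forall y : input n, [forall i in S, y i == x i] ==> (g y == g x)].

(* C(g,x) : minimal size of a certificate agreeing with x
   (S = whole set is always one, so the bound n is attained or beaten) *)
Definition cert n (g : input n -> bool) (x : input n) : nat :=
  \big[minn/n]_(S : {set 'I_n} | is_cert g x S) #|S|.

Definition C1 n (g : input n -> bool) : nat :=
  \max_(x : input n | g x) cert g x.

From mathcomp Require Import all_boot zify.
Set Implicit Arguments. Unset Strict Implicit. Unset Printing Implicit Defensive.

(* Take 2k variables forming k pairs, and place the pairs in a grid with m
   rows and t = ceil(k/m) columns.  The function is the OR of k terms: T_p asks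
   pair p to be (1, 1), the first variable of every other pair in the row of p
   to be 0, and also the second variable of the pairs in the floor(t/2)
   columns following p cyclically to be 0.  So T_p has at most t + floor(t/2) + 1
   literals, exactly that many when the row of p is full, and all of them are
   sensitive at the satisfying input of T_p; this gives C_1.
   Of two distinct columns one always lies in the near half after the other,
   and then the two terms make incompatible demands on three variables, so at
   a 0-input no two single flips satisfying terms of the same row differ:
   s_0 = m.  One violated literal per term certifies any 0-input, so
   bs_0 <= k, and at the all-zero input the k pairs are sensitive blocks. *)

Lemma geq_bigmin_cond (I : finType) (P : pred I) (F : I -> nat) n0 i0 :
  P i0 -> \big[minn/n0]_(i | P i) F i <= F i0.
Proof.
move=> Pi0; have : i0 \in index_enum I by rewrite mem_index_enum.
elim: (index_enum I) => // j r IHr; rewrite inE big_cons => /predU1P[<-|/IHr].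
  by rewrite Pi0 geq_minl.
by case: ifP => // _; rewrite geq_min => ->; rewrite orbT.
Qed.

Lemma leq_bigmin_cond (I : finType) (P : pred I) (F : I -> nat) n0 c :
  (forall i, P i -> c <= F i) -> c <= n0 -> c <= \big[minn/n0]_(i | P i) F i.
Proof.
by move=> cF cn0; elim/big_ind: _ => // a b ca cb; rewrite leq_min ca cb.
Qed.

Lemma leq_card_nat n (A : {set 'I_n}) V (F : nat -> nat) :
  (forall i j, i < V -> j < V -> F i = F j -> i = j) ->
  (forall j, j < V -> exists2 v : 'I_n, v \in A & val v = F j) ->
  V <= #|A|.
Proof.
move=> Finj FA.
have uniqF : uniq [seq F j | j <- iota 0 V].
  by rewrite map_inj_in_uniq ?iota_uniq // => i j; rewrite !mem_iota; apply: Finj.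
rewrite -[X in X <= _](size_iota 0) -(size_map F) cardE -(size_map val).
apply: uniq_leq_size uniqF _ => y /mapP[j]; rewrite mem_iota => /FA[v vA <-] ->.
by rewrite map_f ?mem_enum.
Qed.

Lemma card_leq_nat n (A : {set 'I_n}) V (G : nat -> nat) :
  {in A &, forall u v : 'I_n, G u = G v -> u = v} ->
  {in A, forall u : 'I_n, G u < V} -> #|A| <= V.
Proof.
move=> Ginj GV.
have uniqG : uniq [seq G (val u) | u <- enum A].
  by rewrite map_inj_in_uniq ?enum_uniq // => u v; rewrite !mem_enum; apply: Ginj.
rewrite cardE -(size_map (fun u : 'I_n => G u)) -(size_iota 0 V).
apply: uniq_leq_size uniqG _ => y /mapP[u].
by rewrite mem_enum => /GV + ->; rewrite mem_iota.
Qed.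

Lemma flip1E n (x : input n) (i v : 'I_n) : flip x [set i] v = (v == i) (+) x v.
Proof. by rewrite /flip ffunE in_set1; case: (v == i). Qed.

Section Certificates.

Variables (n : nat) (g : input n -> bool).

Lemma certP (x : input n) (S : {set 'I_n}) :
  reflect (forall y : input n, {in S, forall i, y i = x i} -> g y = g x)
          (is_cert g x S).
Proof.
apply: (iffP forallP) => [cS y yS | cS y].
  by apply/eqP; apply: (implyP (cS y)); apply/forall_inP => i /yS ->.
by apply/implyP => /forall_inP yS; rewrite cS // => i /yS /eqP.
Qed.

Lemma cert_le (x : input n) (S : {set 'I_n}) : is_cert g x S -> cert g x <= #|S|.
Proof. exact: geq_bigmin_cond. Qed.

Lemma sensitive_in_cert (x : input n) (S : {set 'I_n}) (i : 'I_n) :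
  is_cert g x S -> g x != g (flip x [set i]) -> i \in S.
Proof.
move=> /certP cS; apply: contraR => iS; rewrite cS // => j jS.
by rewrite flip1E; case: eqP => // ji; rewrite ji (negbTE iS) in jS.
Qed.

Lemma sens_le_cert (x : input n) : sens g x <= cert g x.
Proof.
apply: leq_bigmin_cond => [S cS|]; last by rewrite -[X in _ <= X]card_ord max_card.
by apply: subset_leq_card; apply/subsetP => i; rewrite inE; apply: sensitive_in_cert.
Qed.

(* A family of disjoint sensitive blocks injects into any certificate, since
   every block must meet it. *)
Lemma bsens_le_cert (x : input n) (S : {set 'I_n}) :
  is_cert g x S -> bsens g x <= #|S|.
Proof.
move=> /certP cS; apply/bigmax_leqP => P /and3P[/trivIsetP disjP _ /forall_inP sensP].
have meetS B : B \in P -> B :&: S != set0.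
  move=> PB; apply: contraNneq (sensP B PB) => BS0; apply/eqP/cS => i iS.
  rewrite /flip ffunE; case: ifP => // iB.
  by have := in_set0 i; rewrite -BS0 inE iB iS.
pose f B := [pick i in B :&: S].
have fS B : B \in P -> exists2 i, i \in B :&: S & f B = Some i.
  move=> /meetS /set0Pn[i0 i0BS]; rewrite /f.
  by case: pickP => [i iBS | /(_ i0)]; [exists i | rewrite i0BS].
have f_inj : {in P &, injective f}.
  move=> B B' PB PB'; case: (fS B PB) (fS B' PB') => [i + ->] [j + ->] [ij].
  rewrite -{}ij !inE => /andP[iB _] /andP[iB' _]; apply/eqP/negPn/negP => BB'.
  by move: (disjP B B' PB PB' BB') => /disjointFr /(_ iB); rewrite iB'.
rewrite -(card_in_imset f_inj) -[#|S|](card_imset _ (@Some_inj _)).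
apply: subset_leq_card; apply/subsetP => _ /imsetP[B PB ->].
by case: (fS B PB) => i; rewrite inE => /andP[_ iS] ->; apply: imset_f.
Qed.

Lemma sens_le_s0 (x : input n) : ~~ g x -> sens g x <= s0 g.
Proof. exact: (@leq_bigmax_cond _ (fun x => ~~ g x) (sens g)). Qed.

Lemma bsens_le_bs0 (x : input n) : ~~ g x -> bsens g x <= bs0 g.
Proof. exact: (@leq_bigmax_cond _ (fun x => ~~ g x) (bsens g)). Qed.

Lemma cert_le_C1 (x : input n) : g x -> cert g x <= C1 g.
Proof. exact: (@leq_bigmax_cond _ g (cert g)). Qed.

End Certificates.

Section DNF.

Variables (n : nat) (I : finType).
Variables (supp : I -> {set 'I_n}) (pat : I -> 'I_n -> bool).

Definition term_sat (p : I) (x : input n) := [forall v in supp p, x v == pat p v].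

Definition dnf (x : input n) := [exists p, term_sat p x].

Lemma term_satP (p : I) (x : input n) :
  reflect {in supp p, forall v, x v = pat p v} (term_sat p x).
Proof. by apply: (iffP forall_inP) => sat v /sat /eqP. Qed.

Lemma term_sat_cert (p : I) (x : input n) : term_sat p x -> is_cert dnf x (supp p).
Proof.
move=> satx; apply/certP => y yx; have -> : dnf x by apply/existsP; exists p.
by apply/existsP; exists p; apply/term_satP => v vp; rewrite yx // (term_satP _ _ satx).
Qed.

Lemma C1_dnf_le c : (forall p, #|supp p| <= c) -> C1 dnf <= c.
Proof.
move=> suppc; apply/bigmax_leqP => x /existsP[p satx].
exact: leq_trans (cert_le (term_sat_cert satx)) (suppc p).
Qed.

(* At a 0-input, one violated literal per term already forms a certificate. *)
Lemma bs0_dnf_le : bs0 dnf <= #|I|.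
Proof.
apply/bigmax_leqP => x dnfx.
pose viol p := [pick v in supp p | x v != pat p v].
have violP p : exists2 v, viol p = Some v & (v \in supp p) && (x v != pat p v).
  rewrite /viol; case: pickP => [v | noviol]; first by exists v.
  case/negP: dnfx; apply/existsP; exists p; apply/term_satP => v vp.
  by move: (noviol v); rewrite vp => /negbT /negPn /eqP.
pose S := [set v | Some v \in viol @: [set: I]].
have certS : is_cert dnf x S.
  apply/certP => y yx; rewrite (negbTE dnfx).
  apply/negbTE/existsP => -[p /term_satP sat].
  case: (violP p) => v violv /andP[vp]; rewrite -yx ?sat ?eqxx //.
  by rewrite inE -violv imset_f.
apply: leq_trans (bsens_le_cert certS) _.
rewrite -(card_imset _ (@Some_inj _)) -[#|I|]cardsT.
apply: leq_trans (leq_imset_card viol _); apply: subset_leq_card.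
by apply/subsetP => o /imsetP[v]; rewrite inE => vS ->.
Qed.

Lemma term_sat_flip1 (p : I) (x : input n) (i : 'I_n) :
  term_sat p (flip x [set i]) -> {in supp p, forall v, x v = (v == i) (+) pat p v}.
Proof. by move=> /term_satP sat v /sat; rewrite flip1E => <-; rewrite addKb. Qed.

Lemma term_sat_flip1_mem (p : I) (x : input n) (i : 'I_n) :
  ~~ term_sat p x -> term_sat p (flip x [set i]) -> i \in supp p.
Proof.
move=> unsat /term_sat_flip1 sat; apply: contraR unsat => ip.
by apply/term_satP => v vp; rewrite sat //; case: eqP vp => // ->; rewrite (negbTE ip).
Qed.

Lemma term_sat_flip1_inj (p : I) (x : input n) (i j : 'I_n) : ~~ term_sat p x ->
  term_sat p (flip x [set i]) -> term_sat p (flip x [set j]) -> i = j.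
Proof.
move=> unsat sati satj; have ip := term_sat_flip1_mem unsat sati.
move: (term_sat_flip1 sati ip) (term_sat_flip1 satj ip); rewrite eqxx.
by case: eqP => // _ ->; case: (pat p i).
Qed.

End DNF.

Section Construction.

Variables m k : nat.
Hypotheses (m_gt0 : 0 < m) (m_le_k : m <= k).

Definition ncols := (k + m - 1) %/ m.

Lemma ncolsM_ge : k <= ncols * m.
Proof.
have := ltn_pmod (k + m - 1) m_gt0; have := divn_eq (k + m - 1) m; rewrite /ncols; lia.
Qed.

Lemma ncolsM_lt : ncols * m < k + m.
Proof. by have := leq_divM (k + m - 1) m; rewrite /ncols; lia. Qed.

Lemma ncols_gt0 : 0 < ncols.
Proof. by have := ncolsM_ge; case: ncols => //; lia. Qed.

Lemma ltn_col q : q < k -> q %/ m < ncols.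
Proof. by move=> qk; rewrite ltn_divLR //; have := ncolsM_ge; lia. Qed.

Lemma col_lt_k j : j < ncols -> j * m < k.
Proof. by move=> jt; have := ncolsM_lt; nia. Qed.

Lemma eq_row_col q q' : q %% m = q' %% m -> q %/ m = q' %/ m -> q = q'.
Proof. by move=> eq_row eq_col; rewrite (divn_eq q m) (divn_eq q' m) eq_row eq_col. Qed.

Definition col_dist r s := (s + ncols - r) %% ncols.

Lemma col_distE r s : r < ncols -> s < ncols ->
  col_dist r s = if r <= s then s - r else s + ncols - r.
Proof.
move=> rt st; rewrite /col_dist; case: ifP => rs; last by rewrite modn_small //; lia.
have -> : s + ncols - r = s - r + ncols by lia.
by rewrite modnDr modn_small //; lia.
Qed.

Lemma col_dist_lt r s : col_dist r s < ncols.
Proof. exact: ltn_pmod ncols_gt0. Qed.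

Lemma col_dist_eq0 r s : r < ncols -> s < ncols -> (col_dist r s == 0) = (s == r).
Proof. by move=> rt st; rewrite col_distE //; case: ifP; lia. Qed.

Lemma col_dist_inj r s s' : r < ncols -> s < ncols -> s' < ncols ->
  col_dist r s = col_dist r s' -> s = s'.
Proof. by move=> rt st s't; rewrite !col_distE //; case: ifP; case: ifP; lia. Qed.

Lemma col_dist0n j : j < ncols -> col_dist 0 j = j.
Proof. by move=> jt; rewrite col_distE ?ncols_gt0 // subn0. Qed.

Lemma col_dist_half r s : r < ncols -> s < ncols ->
  (col_dist r s <= ncols./2) || (col_dist s r <= ncols./2).
Proof. by move=> rt st; rewrite !col_distE //; case: ifP; case: ifP; lia. Qed.

(* Variable v is the (odd v)-th variable of pair v./2, and pair q lies in row
   q %% m and column q %/ m of the grid; in_term p v says that v occurs in T_p. *)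
Definition in_term (p v : nat) : bool :=
  (v./2 == p) ||
  [&& v./2 %% m == p %% m, v./2 != p &
      ~~ odd v || (col_dist (p %/ m) (v./2 %/ m) <= ncols./2)].

Definition term_supp (p : 'I_k) : {set 'I_(2 * k)} :=
  [set v : 'I_(2 * k) | in_term p v].

Definition term_pat (p : 'I_k) (v : 'I_(2 * k)) : bool := v./2 == p.

Definition grid_dnf := dnf term_supp term_pat.

Local Notation sat := (term_sat term_supp term_pat).

Lemma pair_var_subproof (q : 'I_k) (b : bool) : 2 * q + b < 2 * k.
Proof. by case: b; have := ltn_ord q; lia. Qed.

Definition pair_var (q : 'I_k) (b : bool) : 'I_(2 * k) :=
  Ordinal (pair_var_subproof q b).

Lemma pair_var_half q b : (pair_var q b)./2 = q.
Proof. by case: b => /=; lia. Qed.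

Lemma odd_pair_var q b : odd (pair_var q b) = b.
Proof. by case: b => /=; lia. Qed.

Lemma in_term_row p v : in_term p v -> v./2 %% m = p %% m.
Proof. by case/orP => [/eqP -> | /and3P[/eqP]]. Qed.

Lemma in_term_other_pair p v : p < k -> v < 2 * k -> in_term p v -> v./2 != p ->
  [/\ v./2 %/ m != p %/ m, v./2 %/ m < ncols &
      odd v -> col_dist (p %/ m) (v./2 %/ m) <= ncols./2].
Proof.
move=> pk vk /orP[/eqP -> | /and3P[/eqP eq_row vp near]]; first by rewrite eqxx.
split; last by move: near => /orP[/negP|].
- by apply: contra vp => /eqP /(eq_row_col eq_row) ->.
- by apply: ltn_col; lia.
Qed.

(* If p and q share a row and q lies in the near half after p, then T_p
   forbids all of pair q and the first variable of pair p, while T_q requires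
   them: three distinct literals cannot be repaired by two single flips. *)
Lemma flip1_sat_near_terms (p q : 'I_k) (x : input (2 * k)) (i j : 'I_(2 * k)) :
  p != q -> p %% m = q %% m -> col_dist (p %/ m) (q %/ m) <= ncols./2 ->
  sat p (flip x [set i]) -> sat q (flip x [set j]) -> False.
Proof.
rewrite -val_eqE => /= pq eq_row near /term_sat_flip1 satp /term_sat_flip1 satq.
have qp : (q : nat) != p by rewrite eq_sym.
have q_in_p b : pair_var q b \in term_supp p.
  by rewrite inE /in_term pair_var_half eq_row (negbTE qp) eqxx near orbT.
have q_in_q b : pair_var q b \in term_supp q.
  by rewrite inE /in_term pair_var_half eqxx.
have p_in_p : pair_var p false \in term_supp p.
  by rewrite inE /in_term pair_var_half eqxx.
have p_in_q : pair_var p false \in term_supp q.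
  by rewrite inE /in_term pair_var_half eq_row (negbTE pq) eqxx odd_pair_var.
move: (satp _ (q_in_p false)) (satq _ (q_in_q false)).
move: (satp _ (q_in_p true)) (satq _ (q_in_q true)).
move: (satp _ p_in_p) (satq _ p_in_q).
rewrite /term_pat !pair_var_half (negbTE pq) (negbTE qp) eqxx -!val_eqE /=.
move: pq; lia.
Qed.

Lemma sensitive_row_inj (x : input (2 * k)) (i j : 'I_(2 * k)) :
  ~~ grid_dnf x -> grid_dnf (flip x [set i]) -> grid_dnf (flip x [set j]) ->
  i./2 %% m = j./2 %% m -> i = j.
Proof.
move=> /existsPn unsat /existsP[p satp] /existsP[q satq] eq_row_ij.
have := term_sat_flip1_mem (unsat p) satp; rewrite inE => /in_term_row row_i.
have := term_sat_flip1_mem (unsat q) satq; rewrite inE => /in_term_row row_j.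
have eq_row : p %% m = q %% m by rewrite -row_i -row_j.
have [pq | pq] := eqVneq p q.
  by rewrite -pq in satq; apply: term_sat_flip1_inj (unsat p) satp satq.
have [rp rq] := (ltn_col (ltn_ord p), ltn_col (ltn_ord q)).
have qp : q != p by rewrite eq_sym.
case/orP: (col_dist_half rp rq) => near.
  by case: (flip1_sat_near_terms pq eq_row near satp satq).
by case: (flip1_sat_near_terms qp (esym eq_row) near satq satp).
Qed.

Lemma s0_grid_le : s0 grid_dnf <= m.
Proof.
apply/bigmax_leqP => x unsat; rewrite /sens.
apply: (card_leq_nat (G := fun v => v./2 %% m)) => [u v | u _]; last exact: ltn_pmod.
rewrite !inE (negbTE unsat) /= !negbK; exact: sensitive_row_inj.
Qed.

(* Pairs 0, ..., m - 1 (one per row) are set to (0, 1), all others to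
   (0, 0); flipping the first variable of pair j < m then satisfies T_j. *)
Lemma s0_grid_ge : m <= s0 grid_dnf.
Proof.
pose x0 : input (2 * k) := [ffun v : 'I_(2 * k) => odd v && (v./2 < m)].
have unsat0 : ~~ grid_dnf x0.
  apply/existsPn => p; apply/term_satP => /(_ (pair_var p false)).
  by rewrite inE /in_term /term_pat ffunE odd_pair_var pair_var_half eqxx => /(_ isT).
apply: leq_trans (sens_le_s0 unsat0); rewrite /sens.
apply: (leq_card_nat (F := fun j => 2 * j)) => [i j _ _ | j jm]; first lia.
have jk : j < k by lia.
exists (pair_var (Ordinal jk) false); last by rewrite /= addn0.
rewrite inE (negbTE unsat0) /= negbK; apply/existsP; exists (Ordinal jk).
apply/term_satP => v; rewrite inE /in_term flip1E ffunE /term_pat -val_eqE /=.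
case/orP=> [/eqP vj | /and3P[/eqP eq_row vj _]]; first by rewrite vj jm; lia.
have m_le_v : m <= v./2.
  rewrite leqNgt; apply: contra vj => vm.
  by rewrite -(modn_small vm) -(modn_small jm) eq_row.
by rewrite ltnNge m_le_v (negbTE vj) andbF addbF; lia.
Qed.

Lemma s0_grid : s0 grid_dnf = m.
Proof. by apply/eqP; rewrite eqn_leq s0_grid_le s0_grid_ge. Qed.

Lemma bs0_grid_le : bs0 grid_dnf <= k.
Proof. by have := bs0_dnf_le term_supp term_pat; rewrite card_ord. Qed.

Lemma bs0_grid_ge : k <= bs0 grid_dnf.
Proof.
pose x0 : input (2 * k) := [ffun => false].
have unsat0 : ~~ grid_dnf x0.
  apply/existsPn => p; apply/term_satP => /(_ (pair_var p false)).
  by rewrite inE /in_term /term_pat ffunE pair_var_half eqxx => /(_ isT).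
pose block (p : 'I_k) := [set v : 'I_(2 * k) | v./2 == p].
have in_block p : pair_var p false \in block p by rewrite inE pair_var_half.
have block_inj : injective block.
  move=> p q eq_pq; have := in_block p.
  by rewrite eq_pq inE pair_var_half => /eqP /ord_inj.
have blocks : sens_blocks grid_dnf x0 (block @: [set: 'I_k]).
  apply/and3P; split.
  - apply/trivIsetP => _ _ /imsetP[p _ ->] /imsetP[q _ ->] pq.
    rewrite -setI_eq0; apply/eqP/setP => v; rewrite !inE.
    apply/negP => /andP[/eqP vp /eqP vq]; case/eqP: pq.
    by congr block; apply: ord_inj; rewrite -vp.
  - by apply/imsetP => -[p _ /setP /(_ (pair_var p false))]; rewrite in_block inE.
  - apply/forall_inP => _ /imsetP[p _ ->]; rewrite (negbTE unsat0) /=.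
    rewrite eqbF_neg negbK; apply/existsP; exists p; apply/term_satP => v _.
    by rewrite /flip /term_pat !ffunE /block inE; case: (_ == _).
apply: leq_trans (bsens_le_bs0 unsat0); apply: leq_trans (leq_bigmax_cond _ blocks).
by rewrite card_imset // cardsT card_ord.
Qed.

Lemma bs0_grid : bs0 grid_dnf = k.
Proof. by apply/eqP; rewrite eqn_leq bs0_grid_le bs0_grid_ge. Qed.

(* The literals of T_p are pair p itself, the first variables of the other
   ncols - 1 pairs of its row, and the second variables of the ncols./2 pairs
   following p cyclically in its row; the index below enumerates them. *)
Lemma card_term_supp_le (p : 'I_k) : #|term_supp p| <= ncols + ncols./2 + 1.
Proof.
pose dist v := col_dist (p %/ m) (v./2 %/ m).
pose index v := if v./2 == p then nat_of_bool (odd v)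
                else dist v + (if odd v then ncols else 1).
have cp := ltn_col (ltn_ord p).
have off (v : 'I_(2 * k)) : v \in term_supp p -> v./2 != p ->
    [/\ 0 < dist v < ncols, v./2 %/ m < ncols & odd v -> dist v <= ncols./2].
  rewrite inE => vT vp.
  have [colv cv near] := in_term_other_pair (ltn_ord p) (ltn_ord v) vT vp.
  by rewrite col_dist_lt andbT lt0n col_dist_eq0.
apply: (card_leq_nat (G := index)) => [u v uT vT | v vT]; rewrite /index.
  have [up | up] := eqVneq (u./2) p; have [vp | vp] := eqVneq (v./2) p.
  - by move=> eq_odd; apply: ord_inj; lia.
  - by have [+ _ _] := off v vT vp; case: (odd u); case: (odd v); lia.
  - by have [+ _ _] := off u uT up; case: (odd u); case: (odd v); lia.
  have [du cu _] := off u uT up; have [dv cv _] := off v vT vp.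
  move=> eq_index; have eq_odd : odd u = odd v.
    by move: eq_index; case: (odd u); case: (odd v); lia.
  have eq_col : u./2 %/ m = v./2 %/ m.
    apply: col_dist_inj cp cu cv _; move: eq_index.
    by rewrite /dist eq_odd; case: (odd v); lia.
  have eq_half : u./2 = v./2.
    apply: eq_row_col eq_col; move: uT vT.
    by rewrite !inE => /in_term_row -> /in_term_row ->.
  by apply: ord_inj; lia.
have [vp | vp] := eqVneq (v./2) p; first by have := ncols_gt0; case: (odd v); lia.
by have [dv _ near] := off v vT vp; move: near; case: (odd v); lia.
Qed.

Definition term_input (p : 'I_k) : input (2 * k) := [ffun v => term_pat p v].

Lemma grid_dnf_term_input p : grid_dnf (term_input p).
Proof. by apply/existsP; exists p; apply/term_satP => v _; rewrite ffunE. Qed.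

(* Flipping a literal of T_p kills T_p, and any other T_q still needs both
   variables of pair q, which are 0 in the pattern of T_p. *)
Lemma card_term_supp_le_sens p : #|term_supp p| <= sens grid_dnf (term_input p).
Proof.
apply: subset_leq_card; apply/subsetP => v vT.
rewrite inE grid_dnf_term_input /=; apply/existsPn => q.
apply/negP => /term_sat_flip1 satq.
have [qp | qp] := eqVneq q p.
  by move: (satq v); rewrite qp ffunE eqxx => /(_ vT); case: (term_pat p v).
have q_in_q b : pair_var q b \in term_supp q by rewrite inE /in_term pair_var_half eqxx.
move: (satq _ (q_in_q false)) (satq _ (q_in_q true)) qp.
by rewrite !ffunE /term_pat !pair_var_half eqxx -!val_eqE /=; lia.
Qed.

(* Row 0 is full: column c contains pair c * m for every c < ncols. *)
Lemma card_term_supp0_ge (p0 : 'I_k) :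
  p0 = 0 :> nat -> ncols + ncols./2 + 1 <= #|term_supp p0|.
Proof.
move=> p00; have t_gt0 := ncols_gt0.
have row0 c (b : bool) : 0 < c < ncols -> (b -> c <= ncols./2) ->
    exists2 v : 'I_(2 * k), v \in term_supp p0 & val v = 2 * (c * m) + b.
  move=> /andP[c_pos ct] near; have ck := col_lt_k ct.
  have vk : 2 * (c * m) + b < 2 * k by case: b {near}; lia.
  exists (Ordinal vk) => //; rewrite inE /in_term /= p00.
  have -> : (2 * (c * m) + b)./2 = c * m by case: b {near vk}; lia.
  have -> : odd (2 * (c * m) + b) = b by case: b {near vk}; lia.
  rewrite modnMl mod0n div0n mulnK // col_dist0n //.
  by case: b near {vk} => [/(_ isT) |] near; lia.
apply: (leq_card_nat (F := fun j => if j < 2 then j else if j <= ncols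
          then 2 * ((j - 1) * m) else 2 * ((j - ncols) * m) + 1)).
  by move=> i j _ _; case: ifP; case: ifP; try case: ifP; try case: ifP; nia.
move=> j jV; case: ifP => j2.
  have jk : j < 2 * k by lia.
  by exists (Ordinal jk); rewrite // inE /in_term /= p00; lia.
case: ifP => jt.
  have [|//|v vT vF] := row0 (j - 1) false; first lia.
  by exists v; rewrite // vF addn0.
have [||v vT vF] := row0 (j - ncols) true; [lia | lia |].
by exists v; rewrite // vF.
Qed.

Lemma C1_grid : C1 grid_dnf = ncols + ncols./2 + 1.
Proof.
apply/eqP; rewrite eqn_leq C1_dnf_le /=; last exact: card_term_supp_le.
have k_gt0 : 0 < k by lia.
apply: leq_trans (card_term_supp0_ge (p0 := Ordinal k_gt0) erefl) _.
apply: leq_trans (card_term_supp_le_sens _) _.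
exact: leq_trans (sens_le_cert _ _) (cert_le_C1 (grid_dnf_term_input _)).
Qed.

End Construction.

Theorem theorem1 (m k : nat) (hm : 0 < m) (hmk : m <= k) :
  exists (n : nat) (g : input n -> bool),
    [/\ s0 g = m, bs0 g = k &
        C1 g = (3 * ((k + m - 1) %/ m)) %/ 2 + 1].
Proof.
exists (2 * k), (@grid_dnf m k); split.
- exact: s0_grid.
- exact: bs0_grid.
- by rewrite C1_grid // /ncols; lia.
Qed.
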